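(* Consider a one-site PTM cascade with $n\ge1$ layers. Fix all rate constants and all total amounts (all positive) except $\overline{S}_i$ for some $i\in\{1,\dots,n\}$. Then, as $\overline{S}_i$ increases, the BMSS values of $S_j^1$, $Y_j^0$ and $Y_j^1$ strictly increase for every $j=i,\dots,n$.
   Context: A one-site PTM cascade with $n$ layers has species $E=S_0^1$ and, for $i=1,\dots,n$, $S_i^0,S_i^1,F_i,Y_i^0,Y_i^1$, with reactions $S_{i-1}^1+S_i^0 \rightleftharpoons Y_i^0 \to S_{i-1}^1+S_i^1$ (rate constants $a_i^0,b_i^0,c_i^0$) and $F_i+S_i^1\rightleftharpoons Y_i^1\to F_i+S_i^0$ (rate constants $a_i^1,b_i^1,c_i^1$), all positive, mass-action kinetics. Put $\delta_i=a_i^1/(b_i^1+c_i^1)$, $\gamma_i=(c_i^1/c_i^0)\delta_i$, $\lambda_i=\frac{b_i^0+c_i^0}{a_i^0}\gamma_i$. Given total amounts $\overline{E},\overline{F}_i,\overline{S}_i$, a steady state is a real solution of: $Y_i^0=\gamma_iF_iS_i^1$, $Y_i^1=\delta_iF_iS_i^1$, $\lambda_iF_iS_i^1=S_i^0S_{i-1}^1$, $\overline{F}_i=F_i+Y_i^1$, $\overline{S}_i=S_i^0+S_i^1+Y_i^0+Y_i^1+Y_{i+1}^0$ ($i=1,\dots,n$, $Y_{n+1}^0:=0$), $\overline{E}=E+Y_1^0$. A BMSS is a steady state with positive total amounts and all concentrations nonnegative; for positive total amounts it exists and is unique. *)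

From Stdlib Require Import Reals Lra.
Open Scope R_scope.

(* Rate constants of the cascade, indexed by layer i = 1..n (values at other
   indices are irrelevant). *)
Record Rates := mkRates {
  a0 : nat -> R; b0 : nat -> R; c0 : nat -> R;
  a1 : nat -> R; b1 : nat -> R; c1 : nat -> R }.

Definition rates_pos (n : nat) (k : Rates) : Prop :=
  forall i, (1 <= i <= n)%nat ->
    0 < a0 k i /\ 0 < b0 k i /\ 0 < c0 k i /\
    0 < a1 k i /\ 0 < b1 k i /\ 0 < c1 k i.

Definition delta (k : Rates) (i : nat) : R := a1 k i / (b1 k i + c1 k i).
Definition gamma (k : Rates) (i : nat) : R := (c1 k i / c0 k i) * delta k i.
Definition lambda (k : Rates) (i : nat) : R :=
  ((b0 k i + c0 k i) / a0 k i) * gamma k i.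

(* Concentrations: E = S_0^1, and for layer i: S_i^0, S_i^1, F_i, Y_i^0, Y_i^1. *)
Record State := mkState {
  E : R; S0 : nat -> R; S1 : nat -> R; F : nat -> R; Y0 : nat -> R; Y1 : nat -> R }.

Definition S1prev (x : State) (i : nat) : R :=
  match i with O => E x | 1%nat => E x | S j => S1 x j end.

Definition Y0next (n : nat) (x : State) (i : nat) : R :=
  if Nat.eqb i n then 0 else Y0 x (S i).

Definition steady_state (n : nat) (k : Rates) (Ebar : R) (Fbar Sbar : nat -> R)
  (x : State) : Prop :=
  (forall i, (1 <= i <= n)%nat ->
     Y0 x i = gamma k i * F x i * S1 x i /\
     Y1 x i = delta k i * F x i * S1 x i /\
     lambda k i * F x i * S1 x i = S0 x i * S1prev x i /\
     Fbar i = F x i + Y1 x i /\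
     Sbar i = S0 x i + S1 x i + Y0 x i + Y1 x i + Y0next n x i) /\
  Ebar = E x + Y0 x 1%nat.

Definition BMSS (n : nat) (k : Rates) (Ebar : R) (Fbar Sbar : nat -> R)
  (x : State) : Prop :=
  steady_state n k Ebar Fbar Sbar x /\
  0 < Ebar /\ (forall i, (1 <= i <= n)%nat -> 0 < Fbar i /\ 0 < Sbar i) /\
  0 <= E x /\
  (forall i, (1 <= i <= n)%nat ->
     0 <= S0 x i /\ 0 <= S1 x i /\ 0 <= F x i /\ 0 <= Y0 x i /\ 0 <= Y1 x i).

From Stdlib Require Import Reals Lra Lia.
Open Scope R_scope.

Set Implicit Arguments.

(* Write P_j = F_j S_j^1; the conservation of F_j makes P_j = Fbar_j S_j^1 / (1 + delta_j S_j^1)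
   an increasing function of S_j^1, and the total of layer j is
   S_j^0 + S_j^1 + (gamma_j + delta_j) P_j + gamma_(j+1) P_(j+1)  with  S_j^0 = lambda_j P_j / S_(j-1)^1.
   It increases with S_j^1 and S_(j+1)^1 and decreases with S_(j-1)^1.  Comparing two BMSS,
   a downward induction over the layers with unchanged totals shows that an increase of
   S_(j-1)^1 propagates to S_j^1.  If S_i^1 did not increase, neither would the S_j^1 for
   j > i, so the larger total of layer i would force S_(i-1)^1 to drop; layer by layer this
   forces E and Y_1^0 to drop, contradicting Ebar = E + Y_1^0. *)

Definition S1ext (x : State) (j : nat) : R :=
  match j with O => E x | S _ => S1 x j end.

Definition FS1 (x : State) (j : nat) : R := F x j * S1 x j.

Lemma S1prev_S (x : State) (p : nat) : S1prev x (S p) = S1ext x p.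
Proof. destruct p; reflexivity. Qed.

Lemma hyperbolic_diff (d c b b' P P' : R) :
  P * (1 + d * b) = c * b -> P' * (1 + d * b') = c * b' ->
  (P - P') * ((1 + d * b) * (1 + d * b')) = c * (b - b').
Proof.
  intros HP HP'.
  replace ((P - P') * ((1 + d * b) * (1 + d * b')))
    with (P * (1 + d * b) * (1 + d * b') - P' * (1 + d * b') * (1 + d * b)) by ring.
  rewrite HP, HP'. ring.
Qed.

Lemma hyperbolic_le (d c b b' P P' : R) :
  0 <= d -> 0 <= c -> 0 <= b -> 0 <= b' ->
  P * (1 + d * b) = c * b -> P' * (1 + d * b') = c * b' -> b' <= b -> P' <= P.
Proof.
  intros Hd Hc Hb Hb' HP HP' Hle.
  pose proof (hyperbolic_diff HP HP') as Hdiff.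
  assert (Hden : 0 < (1 + d * b) * (1 + d * b')) by (apply Rmult_lt_0_compat; nra).
  nra.
Qed.

Lemma hyperbolic_lt (d c b b' P P' : R) :
  0 <= d -> 0 < c -> 0 <= b -> 0 <= b' ->
  P * (1 + d * b) = c * b -> P' * (1 + d * b') = c * b' -> b' < b -> P' < P.
Proof.
  intros Hd Hc Hb Hb' HP HP' Hlt.
  pose proof (hyperbolic_diff HP HP') as Hdiff.
  assert (Hden : 0 < (1 + d * b) * (1 + d * b')) by (apply Rmult_lt_0_compat; nra).
  nra.
Qed.

Section Cascade.

Variables (n : nat) (k : Rates) (Ebar : R) (Fbar : nat -> R).
Hypothesis n_pos : (1 <= n)%nat.
Hypothesis k_pos : rates_pos n k.

Local Notation bmss := (BMSS n k Ebar Fbar).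

Lemma delta_pos j : (1 <= j <= n)%nat -> 0 < delta k j.
Proof.
  intros Hj. destruct (k_pos Hj) as (_ & _ & _ & ha & hb & hc).
  unfold delta. apply Rdiv_lt_0_compat; lra.
Qed.

Lemma gamma_pos j : (1 <= j <= n)%nat -> 0 < gamma k j.
Proof.
  intros Hj. pose proof (delta_pos Hj). destruct (k_pos Hj) as (_ & _ & hc0 & _ & _ & hc1).
  unfold gamma. apply Rmult_lt_0_compat; [apply Rdiv_lt_0_compat|]; lra.
Qed.

Lemma lambda_pos j : (1 <= j <= n)%nat -> 0 < lambda k j.
Proof.
  intros Hj. pose proof (gamma_pos Hj). destruct (k_pos Hj) as (ha0 & hb0 & hc0 & _).
  unfold lambda. apply Rmult_lt_0_compat; [apply Rdiv_lt_0_compat|]; lra.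
Qed.

Section SteadyState.

Variables (Sb : nat -> R) (x : State).
Hypothesis x_bmss : bmss Sb x.

Lemma Ebar_pos : 0 < Ebar.
Proof. destruct x_bmss as (_ & HE & _). exact HE. Qed.

Lemma Fbar_pos j : (1 <= j <= n)%nat -> 0 < Fbar j.
Proof. intros Hj. destruct x_bmss as (_ & _ & Hpos & _). exact (proj1 (Hpos j Hj)). Qed.

Lemma Sb_pos j : (1 <= j <= n)%nat -> 0 < Sb j.
Proof. intros Hj. destruct x_bmss as (_ & _ & Hpos & _). exact (proj2 (Hpos j Hj)). Qed.

Lemma S1ext_ge0 p : (p <= n)%nat -> 0 <= S1ext x p.
Proof.
  intros Hp. destruct x_bmss as (_ & _ & _ & HE & Hnn).
  destruct p as [|p]; [exact HE|].
  destruct (Hnn (S p)) as (_ & HS1 & _); [lia | exact HS1].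
Qed.

Lemma Y0_FS1 j : (1 <= j <= n)%nat -> Y0 x j = gamma k j * FS1 x j.
Proof.
  intros Hj. destruct x_bmss as ((Hss & _) & _). destruct (Hss j Hj) as (HY0 & _).
  unfold FS1. rewrite HY0. ring.
Qed.

Lemma Y1_FS1 j : (1 <= j <= n)%nat -> Y1 x j = delta k j * FS1 x j.
Proof.
  intros Hj. destruct x_bmss as ((Hss & _) & _). destruct (Hss j Hj) as (_ & HY1 & _).
  unfold FS1. rewrite HY1. ring.
Qed.

Lemma S0_balance p : (S p <= n)%nat ->
  S0 x (S p) * S1ext x p = lambda k (S p) * FS1 x (S p).
Proof.
  intros Hp. destruct x_bmss as ((Hss & _) & _).
  destruct (Hss (S p)) as (_ & _ & Hlam & _); [lia|].
  rewrite <- S1prev_S, <- Hlam. unfold FS1. ring.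
Qed.

Lemma FS1_saturation j : (1 <= j <= n)%nat ->
  FS1 x j * (1 + delta k j * S1 x j) = Fbar j * S1 x j.
Proof.
  intros Hj. destruct x_bmss as ((Hss & _) & _).
  destruct (Hss j Hj) as (_ & HY1 & _ & HF & _).
  rewrite HF, HY1. unfold FS1. ring.
Qed.

Lemma layer_total j : (1 <= j <= n)%nat ->
  Sb j = S0 x j + S1 x j + Y0 x j + Y1 x j + Y0next n x j.
Proof.
  intros Hj. destruct x_bmss as ((Hss & _) & _). apply (Hss j Hj).
Qed.

Lemma enzyme_total : Ebar = S1ext x 0 + Y0next n x 0.
Proof.
  destruct x_bmss as ((_ & HE) & _).
  unfold Y0next. destruct (Nat.eqb_spec 0 n); [lia | exact HE].
Qed.

Lemma Y0next_zero p : (p <= n)%nat -> S1ext x p = 0 -> Y0next n x p = 0.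
Proof.
  intros Hp Hs. unfold Y0next. destruct (Nat.eqb_spec p n) as [_|Hpn]; [reflexivity|].
  pose proof (S0_balance (p := p) ltac:(lia)) as Hbal. rewrite Hs, Rmult_0_r in Hbal.
  pose proof (lambda_pos (j := S p) ltac:(lia)).
  destruct (Rmult_integral _ _ (eq_sym Hbal)) as [Hl|HFS1]; [lra|].
  rewrite (Y0_FS1 (j := S p)), HFS1 by lia. ring.
Qed.

(* E = 0 would empty the first layer, and S_p^1 = 0 would empty layer p: every
   term of its total then vanishes, against Sbar_p > 0. *)
Lemma S1ext_pos p : (p <= n)%nat -> 0 < S1ext x p.
Proof.
  induction p as [|p IH]; intros Hp;
    destruct (Rle_lt_or_eq_dec _ _ (S1ext_ge0 Hp)) as [Hlt|Hzero]; try exact Hlt; exfalso.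
  - pose proof enzyme_total as HE. pose proof Ebar_pos.
    rewrite (Y0next_zero Hp (eq_sym Hzero)), <- Hzero in HE. lra.
  - change (0 = S1 x (S p)) in Hzero.
    assert (HFS1 : FS1 x (S p) = 0) by (unfold FS1; rewrite <- Hzero; ring).
    assert (HS0 : S0 x (S p) = 0).
    { pose proof (S0_balance Hp) as Hbal. pose proof (IH ltac:(lia)).
      rewrite HFS1, Rmult_0_r in Hbal. destruct (Rmult_integral _ _ Hbal); [assumption | lra]. }
    pose proof (layer_total (j := S p) ltac:(lia)) as Htot.
    pose proof (Sb_pos (j := S p) ltac:(lia)).
    rewrite (Y0_FS1 (j := S p)), (Y1_FS1 (j := S p)), (Y0next_zero Hp (eq_sym Hzero)),
      HFS1, HS0, <- Hzero in Htot by lia.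
    lra.
Qed.

Lemma S1_pos j : (1 <= j <= n)%nat -> 0 < S1 x j.
Proof. intros Hj. destruct j as [|j]; [lia | exact (S1ext_pos (p := S j) ltac:(lia))]. Qed.

Lemma S0_pos p : (S p <= n)%nat -> 0 < S0 x (S p).
Proof.
  intros Hp.
  pose proof (S1ext_pos (p := p) ltac:(lia)) as Hprev.
  pose proof (S1_pos (j := S p) ltac:(lia)) as HS1.
  pose proof (FS1_saturation (j := S p) ltac:(lia)) as Hsat.
  pose proof (S0_balance Hp) as Hbal.
  pose proof (delta_pos (j := S p) ltac:(lia)).
  pose proof (lambda_pos (j := S p) ltac:(lia)).
  pose proof (Fbar_pos (j := S p) ltac:(lia)).
  assert (HFS1 : 0 < FS1 x (S p)).
  { assert (0 < Fbar (S p) * S1 x (S p)) by (apply Rmult_lt_0_compat; assumption).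
    assert (0 < 1 + delta k (S p) * S1 x (S p)) by nra.
    nra. }
  assert (0 < lambda k (S p) * FS1 x (S p)) by (apply Rmult_lt_0_compat; assumption).
  nra.
Qed.

End SteadyState.

Section TwoStates.

Variables (Sb Sb' : nat -> R) (x x' : State).
Hypotheses (x_bmss : bmss Sb x) (x'_bmss : bmss Sb' x').

Lemma FS1_le j : (1 <= j <= n)%nat -> S1 x' j <= S1 x j -> FS1 x' j <= FS1 x j.
Proof.
  intros Hj Hle.
  exact (hyperbolic_le (Rlt_le _ _ (delta_pos Hj)) (Rlt_le _ _ (Fbar_pos x_bmss Hj))
    (Rlt_le _ _ (S1_pos x_bmss Hj)) (Rlt_le _ _ (S1_pos x'_bmss Hj))
    (FS1_saturation x_bmss Hj) (FS1_saturation x'_bmss Hj) Hle).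
Qed.

Lemma FS1_lt j : (1 <= j <= n)%nat -> S1 x' j < S1 x j -> FS1 x' j < FS1 x j.
Proof.
  intros Hj Hlt.
  exact (hyperbolic_lt (Rlt_le _ _ (delta_pos Hj)) (Fbar_pos x_bmss Hj)
    (Rlt_le _ _ (S1_pos x_bmss Hj)) (Rlt_le _ _ (S1_pos x'_bmss Hj))
    (FS1_saturation x_bmss Hj) (FS1_saturation x'_bmss Hj) Hlt).
Qed.

Lemma Y0_Y1_le j : (1 <= j <= n)%nat -> S1 x' j <= S1 x j ->
  Y0 x' j <= Y0 x j /\ Y1 x' j <= Y1 x j.
Proof.
  intros Hj Hle. pose proof (FS1_le Hj Hle).
  rewrite (Y0_FS1 x_bmss), (Y0_FS1 x'_bmss), (Y1_FS1 x_bmss), (Y1_FS1 x'_bmss) by exact Hj.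
  pose proof (gamma_pos Hj). pose proof (delta_pos Hj).
  split; apply Rmult_le_compat_l; lra.
Qed.

Lemma Y0_Y1_lt j : (1 <= j <= n)%nat -> S1 x' j < S1 x j ->
  Y0 x' j < Y0 x j /\ Y1 x' j < Y1 x j.
Proof.
  intros Hj Hlt. pose proof (FS1_lt Hj Hlt).
  rewrite (Y0_FS1 x_bmss), (Y0_FS1 x'_bmss), (Y1_FS1 x_bmss), (Y1_FS1 x'_bmss) by exact Hj.
  pose proof (gamma_pos Hj). pose proof (delta_pos Hj).
  split; apply Rmult_lt_compat_l; lra.
Qed.

Lemma Y0next_le q : (q <= n)%nat -> ((q < n)%nat -> S1 x' (S q) <= S1 x (S q)) ->
  Y0next n x' q <= Y0next n x q.
Proof.
  intros Hq Hle. unfold Y0next. destruct (Nat.eqb_spec q n) as [_|Hqn]; [lra|].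
  apply (Y0_Y1_le (j := S q)); [lia | apply Hle; lia].
Qed.

(* S_p^0 = lambda_p P_p / S_(p-1)^1: smaller numerator, larger denominator. *)
Lemma S0_le p : (S p <= n)%nat ->
  S1ext x p <= S1ext x' p -> S1 x' (S p) <= S1 x (S p) -> S0 x' (S p) <= S0 x (S p).
Proof.
  intros Hp Hprev Hle.
  pose proof (FS1_le (j := S p) ltac:(lia) Hle).
  pose proof (S0_balance x_bmss Hp). pose proof (S0_balance x'_bmss Hp).
  pose proof (lambda_pos (j := S p) ltac:(lia)).
  pose proof (S1ext_pos x_bmss (p := p) ltac:(lia)). pose proof (S0_pos x_bmss Hp).
  nra.
Qed.

Lemma S0_lt p : (S p <= n)%nat ->
  S1ext x p < S1ext x' p -> S1 x' (S p) <= S1 x (S p) -> S0 x' (S p) < S0 x (S p).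
Proof.
  intros Hp Hprev Hle.
  pose proof (FS1_le (j := S p) ltac:(lia) Hle).
  pose proof (S0_balance x_bmss Hp). pose proof (S0_balance x'_bmss Hp).
  pose proof (lambda_pos (j := S p) ltac:(lia)).
  pose proof (S1ext_pos x_bmss (p := p) ltac:(lia)). pose proof (S0_pos x_bmss Hp).
  nra.
Qed.

Lemma total_le p : (S p <= n)%nat ->
  S1ext x p <= S1ext x' p -> S1 x' (S p) <= S1 x (S p) ->
  Y0next n x' (S p) <= Y0next n x (S p) -> Sb' (S p) <= Sb (S p).
Proof.
  intros Hp Hprev Hle Htail.
  pose proof (S0_le Hp Hprev Hle).
  destruct (Y0_Y1_le (j := S p) ltac:(lia) Hle).
  rewrite (layer_total x_bmss), (layer_total x'_bmss) by lia.
  lra.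
Qed.

Lemma total_lt p : (S p <= n)%nat ->
  S1ext x p <= S1ext x' p -> S1 x' (S p) <= S1 x (S p) ->
  S1ext x p < S1ext x' p \/ S1 x' (S p) < S1 x (S p) ->
  Y0next n x' (S p) <= Y0next n x (S p) -> Sb' (S p) < Sb (S p).
Proof.
  intros Hp Hprev Hle Hstrict Htail.
  pose proof (S0_le Hp Hprev Hle).
  destruct (Y0_Y1_le (j := S p) ltac:(lia) Hle).
  rewrite (layer_total x_bmss), (layer_total x'_bmss) by lia.
  destruct Hstrict as [Hlt|Hlt]; [pose proof (S0_lt Hp Hlt Hle)|]; lra.
Qed.

End TwoStates.

(* Downward induction on the layer; the induction hypothesis, applied with the two states
   exchanged, bounds the downstream complex Y_(p+2)^0. *)
Lemma S1_propagate_le p Sb Sb' x x' : (S p <= n)%nat ->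
  (forall l, (S p <= l <= n)%nat -> Sb' l = Sb l) ->
  bmss Sb x -> bmss Sb' x' -> S1ext x p <= S1ext x' p -> S1 x (S p) <= S1 x' (S p).
Proof.
  remember (n - S p)%nat as d eqn:Hd. revert p Sb Sb' x x' Hd.
  induction d as [|d IH]; intros p Sb Sb' x x' Hd Hp Hagree HB HB' Hprev;
    apply Rnot_lt_le; intros Hgt.
  all: enough (Htail : Y0next n x' (S p) <= Y0next n x (S p))
         by (pose proof (total_lt HB HB' Hp Hprev (Rlt_le _ _ Hgt) (or_intror Hgt) Htail);
             rewrite Hagree in * by lia; lra).
  all: apply (Y0next_le HB HB'); [lia | intros Hpn].
  - lia.
  - apply (IH (S p) Sb' Sb x' x); [lia | lia | | exact HB' | exact HB | exact (Rlt_le _ _ Hgt)].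
    intros l Hl. symmetry. apply Hagree. lia.
Qed.

Lemma S1_propagate_lt p Sb Sb' x x' : (S p <= n)%nat ->
  (forall l, (S p <= l <= n)%nat -> Sb' l = Sb l) ->
  bmss Sb x -> bmss Sb' x' -> S1ext x p < S1ext x' p -> S1 x (S p) < S1 x' (S p).
Proof.
  intros Hp Hagree HB HB' Hprev. apply Rnot_le_lt. intros Hge.
  assert (Htail : Y0next n x' (S p) <= Y0next n x (S p)).
  { apply (Y0next_le HB HB'); [lia|]. intros Hpn.
    apply (S1_propagate_le (Sb := Sb') (Sb' := Sb)); [lia | | exact HB' | exact HB | exact Hge].
    intros l Hl. symmetry. apply Hagree. lia. }
  pose proof (total_lt HB HB' Hp (Rlt_le _ _ Hprev) Hge (or_introl Hprev) Htail).
  rewrite Hagree in * by lia. lra.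
Qed.

(* The deficit propagates upstream until it contradicts Ebar = E + Y_1^0. *)
Lemma upstream_deficit_absurd q Sb Sb' x x' : (q <= n)%nat ->
  (forall l, (1 <= l <= q)%nat -> Sb' l = Sb l) ->
  bmss Sb x -> bmss Sb' x' ->
  S1ext x' q < S1ext x q -> Y0next n x' q <= Y0next n x q -> False.
Proof.
  induction q as [|p IH]; intros Hq Hagree HB HB' Hdef Htail.
  - pose proof (enzyme_total HB). pose proof (enzyme_total HB'). lra.
  - destruct (Rle_lt_dec (S1ext x p) (S1ext x' p)) as [Hprev|Hprev].
    + pose proof (total_lt HB HB' Hq Hprev (Rlt_le _ _ Hdef) (or_intror Hdef) Htail).
      rewrite Hagree in * by lia. lra.
    + apply (IH ltac:(lia)); [| exact HB | exact HB' | exact Hprev |].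
      * intros l Hl. apply Hagree. lia.
      * apply (Y0next_le HB HB'); [lia|]. intros _. exact (Rlt_le _ _ Hdef).
Qed.

Lemma S1_lt_at_perturbed_layer p Sb Sb' x x' : (S p <= n)%nat ->
  (forall l, l <> S p -> Sb' l = Sb l) -> Sb (S p) < Sb' (S p) ->
  bmss Sb x -> bmss Sb' x' -> S1 x (S p) < S1 x' (S p).
Proof.
  intros Hp Hagree Hlt HB HB'. apply Rnot_le_lt. intros Hge.
  assert (Htail : Y0next n x' (S p) <= Y0next n x (S p)).
  { apply (Y0next_le HB HB'); [lia|]. intros Hpn.
    apply (S1_propagate_le (Sb := Sb') (Sb' := Sb)); [lia | | exact HB' | exact HB | exact Hge].
    intros l Hl. symmetry. apply Hagree. lia. }
  destruct (Rle_lt_dec (S1ext x p) (S1ext x' p)) as [Hprev|Hprev].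
  - pose proof (total_le HB HB' Hp Hprev Hge Htail). lra.
  - apply (upstream_deficit_absurd (q := p) (x := x) (x' := x') (Sb := Sb) (Sb' := Sb'));
      [lia | | exact HB | exact HB' | exact Hprev |].
    + intros l Hl. apply Hagree. lia.
    + apply (Y0next_le HB HB'); [lia|]. intros _. exact Hge.
Qed.

Lemma S1_lt_downstream p Sb Sb' x x' : (S p <= n)%nat ->
  (forall l, l <> S p -> Sb' l = Sb l) -> Sb (S p) < Sb' (S p) ->
  bmss Sb x -> bmss Sb' x' ->
  forall j, (S p <= j <= n)%nat -> S1 x j < S1 x' j.
Proof.
  intros Hp Hagree Hlt HB HB'.
  induction j as [|j IH]; intros Hj; [lia|].
  destruct (Nat.eq_dec j p) as [->|Hjp].
  - exact (S1_lt_at_perturbed_layer Hp Hagree Hlt HB HB').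
  - destruct j as [|j]; [lia|].
    apply (S1_propagate_lt (Sb := Sb) (Sb' := Sb'));
      [lia | | exact HB | exact HB' | exact (IH ltac:(lia))].
    intros l Hl. apply Hagree. lia.
Qed.

End Cascade.

Theorem mainTheorem7 (n : nat) (k : Rates) (Ebar : R) (Fbar Sbar Sbar' : nat -> R)
  (i : nat) (x x' : State) :
  (1 <= n)%nat ->
  rates_pos n k ->
  (1 <= i <= n)%nat ->
  (forall l, l <> i -> Sbar' l = Sbar l) ->
  Sbar i < Sbar' i ->
  BMSS n k Ebar Fbar Sbar x ->
  BMSS n k Ebar Fbar Sbar' x' ->
  forall j, (i <= j <= n)%nat ->
    S1 x j < S1 x' j /\ Y0 x j < Y0 x' j /\ Y1 x j < Y1 x' j.
Proof.
  intros Hn Hk Hi Hagree Hlt HB HB' j Hj.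
  destruct i as [|p]; [lia|].
  pose proof (S1_lt_downstream (p := p) Hn Hk ltac:(lia) Hagree Hlt HB HB' Hj) as HS1.
  destruct (Y0_Y1_lt Hn Hk HB' HB (j := j) ltac:(lia) HS1).
  auto.
Qed.
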